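(* Let $G$ be a finite simple graph with $n>2$ vertices. Then $\mathrm{mur}(G)=1$ if and only if $G$ or $\overline{G}$ is isomorphic to either $K_r\cup K_s$ for positive integers $r,s$ with $r+s=n$ (so $r+s>2$), or $K_r\cup\overline{K_s}$ for integers $r,s$ with $r+s=n$ and $1<r<n$.
   Context: For a finite simple undirected graph $G$ on vertices $v_1,\dots,v_n$, let $A_G$ be its $(0,1)$-adjacency matrix, $D_G=\mathrm{diag}(d_1,\dots,d_n)$ with $d_i$ the degree of $v_i$, $I$ the $n\times n$ identity matrix and $J$ the $n\times n$ all-ones matrix. A universal adjacency matrix of $G$ is any matrix $\alpha A_G+\beta I+\gamma J+\delta D_G$ with real scalars $\alpha,\beta,\gamma,\delta$ and $\alpha\neq 0$. The minimum universal rank $\mathrm{mur}(G)$ is the minimum rank over all universal adjacency matrices of $G$. $\overline{G}$ denotes the complement of $G$; $K_r\cup K_s$ and $K_r\cup\overline{K_s}$ denote vertex-disjoint unions, where $\overline{K_s}$ is the edgeless graph on $s$ vertices. *)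

From HB Require Import structures.
From mathcomp Require Import all_boot all_order all_algebra.
From mathcomp Require Import reals.
Set Implicit Arguments. Unset Strict Implicit. Unset Printing Implicit Defensive.
Import Order.TTheory GRing.Theory Num.Theory.
Local Open Scope ring_scope.

Definition simple_graph (n : nat) (e : rel 'I_n) : Prop :=
  symmetric e /\ irreflexive e.

Definition adjmx (R : realType) (n : nat) (e : rel 'I_n) : 'M[R]_n :=
  \matrix_(i, j) (e i j)%:R.

Definition degmx (R : realType) (n : nat) (e : rel 'I_n) : 'M[R]_n :=
  \matrix_(i, j) ((i == j)%:R * (#|[set k | e i k]|)%:R).

Definition onesmx (R : realType) (n : nat) : 'M[R]_n := const_mx 1.

Definition univ_adj (R : realType) (n : nat) (e : rel 'I_n)
  (alpha beta gamma delta : R) : 'M[R]_n :=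
  alpha *: adjmx R e + beta *: 1%:M + gamma *: onesmx R n + delta *: degmx R e.

Definition is_mur (R : realType) (n : nat) (e : rel 'I_n) (k : nat) : Prop :=
  (exists alpha beta gamma delta : R,
      alpha != 0 /\ \rank (univ_adj e alpha beta gamma delta) = k) /\
  (forall alpha beta gamma delta : R,
      alpha != 0 -> (k <= \rank (univ_adj e alpha beta gamma delta))%N).

Definition compl_graph (n : nat) (e : rel 'I_n) : rel 'I_n :=
  fun i j => (i != j) && ~~ e i j.

Definition graph_iso (n : nat) (e h : rel 'I_n) : Prop :=
  exists f : 'I_n -> 'I_n, bijective f /\ forall x y, e x y = h (f x) (f y).

(* K_r u K_{n-r}: vertices < r form one clique, the remaining vertices another *)
Definition KK (n r : nat) : rel 'I_n :=
  fun i j => (i != j) && ((i < r)%N == (j < r)%N).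

(* K_r u complement(K_{n-r}): vertices < r form a clique, the others are isolated *)
Definition KKbar (n r : nat) : rel 'I_n :=
  fun i j => [&& i != j, (i < r)%N & (j < r)%N].

From HB Require Import structures.
From mathcomp Require Import all_boot all_order all_algebra.
From mathcomp Require Import reals.
From mathcomp Require Import ring lra zify.
Set Implicit Arguments. Unset Strict Implicit. Unset Printing Implicit Defensive.
Import Order.TTheory GRing.Theory Num.Theory.
Local Open Scope ring_scope.

(* A universal adjacency matrix M of G is symmetric, so if it has rank one then
   M = l w w^T, and off the diagonal it takes the value alpha + gamma on edges and
   gamma on non-edges.  If some weight w_z vanishes, l w_x w_y is zero exactly when
   x or y lies outside the support S of w, so G or its complement is a clique on S
   plus isolated vertices.  Otherwise w takes only two values, since three distinct
   weights would yield three distinct off-diagonal products; then G or its complement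
   is the disjoint union of the two cliques on the level sets of w.  Conversely
   2A + 2I - J and A + D / (|S| - 1) are rank-one universal adjacency matrices of these
   graphs, and complementation permutes the universal adjacency matrices of G. *)

Lemma rank1_sym_factor (F : fieldType) n (M : 'M[F]_n) :
  \rank M = 1%N -> M^T = M ->
  exists (l : F) (w : 'I_n -> F), forall i j, M i j = l * w i * w j.
Proof.
move=> rankM1 symM.
have [u [v defM]] : exists (u : 'cV_n) (v : 'rV_n), M = u *m v.
  by move: (col_base M) (row_base M) (mulmx_base M); rewrite rankM1 => u v <-; exists u, v.
have Muv i j : M i j = u i 0 * v 0 j by rewrite defM !mxE big_ord1.
have [i0 u_i0] : exists i0, u i0 0 != 0.
  case: (pickP (fun i => u i 0 != 0)) => [i0 u_i0 | u0]; first by exists i0.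
  suff M0 : M = 0 by move: rankM1; rewrite M0 mxrank0.
  by apply/matrixP => i j; rewrite Muv mxE (eqP (negbFE (u0 i))) mul0r.
exists (v 0 i0 / u i0 0), (fun i => u i 0) => i j.
have := congr1 (fun A : 'M_n => A j i0) symM; rewrite mxE !Muv => vE.
by rewrite -[v 0 j](mulKf u_i0) vE; field.
Qed.

Lemma rank_outer_le1 (F : fieldType) n (M : 'M[F]_n) (w : 'I_n -> F) :
  (forall i j, M i j = w i * w j) -> (\rank M <= 1)%N.
Proof.
move=> Mw; have -> : M = (\col_i w i) *m (\row_j w j).
  by apply/matrixP => i j; rewrite !mxE big_ord1 !mxE Mw.
exact: leq_trans (mxrankM_maxr _ _) (rank_leq_row _).
Qed.

Lemma mxrank_gt0_entry (F : fieldType) m n (M : 'M[F]_(m, n)) :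
  (0 < \rank M)%N -> exists i j, M i j != 0.
Proof.
rewrite lt0n mxrank_eq0 => /eqP M_neq0.
case: (pickP (fun ij : 'I_m * 'I_n => M ij.1 ij.2 != 0)) => [[i j] /= Mij | M0].
  by exists i, j.
by case: M_neq0; apply/matrixP => i j; rewrite mxE; apply/eqP/negbFE/(M0 (i, j)).
Qed.

Definition nontrivial_graph n (g : rel 'I_n) : Prop :=
  (exists x y, g x y) /\ (exists x y, compl_graph g x y).

Lemma univ_adjE (R : realType) n (e : rel 'I_n) (a b c d : R) i j :
  univ_adj e a b c d i j =
  a * (e i j)%:R + b * (i == j)%:R + c + d * ((i == j)%:R * #|[set k | e i k]|%:R).
Proof. by rewrite /univ_adj /adjmx /degmx /onesmx !mxE mulr1. Qed.

Lemma tr_univ_adj (R : realType) n (e : rel 'I_n) (a b c d : R) :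
  symmetric e -> (univ_adj e a b c d)^T = univ_adj e a b c d.
Proof.
move=> sym_e; apply/matrixP => i j; rewrite mxE !univ_adjE sym_e eq_sym.
by case: eqVneq => [->|] //=; rewrite !mul0r.
Qed.

Section UniversalAdjacency.
Variables (R : realType) (n : nat) (e : rel 'I_n).
Hypothesis irr_e : irreflexive e.

Lemma card_compl_nbhd i :
  (#|[set k | compl_graph e i k]| + #|[set k | e i k]|)%N = n.-1.
Proof.
have -> : [set k | compl_graph e i k] = ~: (i |: [set k | e i k]).
  by apply/setP => k; rewrite !inE negb_or eq_sym.
by have := cardsC (i |: [set k | e i k]); rewrite cardsU1 inE irr_e card_ord; lia.
Qed.

(* A(G^c) = J - I - A(G) and D(G^c) = (n - 1) I - D(G). *)
Lemma univ_adj_compl (a b c d : R) :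
  univ_adj (compl_graph e) a b c d =
  univ_adj e (- a) (b - a + d * n.-1%:R) (a + c) (- d).
Proof.
apply/matrixP => i j; rewrite !univ_adjE.
have /(congr1 (fun k => k%:R : R)) := card_compl_nbhd i; rewrite natrD => deg_i.
rewrite /compl_graph; case: eqVneq => [<-|ij]; rewrite ?irr_e /=.
  by rewrite -deg_i; lra.
by case: (e i j) => /=; lra.
Qed.

Lemma is_mur_compl k : is_mur R (compl_graph e) k <-> is_mur R e k.
Proof.
have toC (a b c d : R) : univ_adj e a b c d =
    univ_adj (compl_graph e) (- a) (b - a + d * n.-1%:R) (a + c) (- d).
  by rewrite univ_adj_compl; congr univ_adj; ring.
have a_neq0 (a : R) : a != 0 -> - a != 0 by rewrite oppr_eq0.
split=> -[[a [b [c [d [a0 rk]]]]] low]; split.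
- exists (- a), (b - a + d * n.-1%:R), (a + c), (- d).
  by rewrite -univ_adj_compl a_neq0.
- by move=> a' b' c' d' /a_neq0 a'0; rewrite toC; apply: low.
- exists (- a), (b - a + d * n.-1%:R), (a + c), (- d).
  by rewrite -toC a_neq0.
- by move=> a' b' c' d' /a_neq0 a'0; rewrite univ_adj_compl; apply: low.
Qed.

Lemma univ_adj_neq0 (a b c d : R) :
  nontrivial_graph e -> a != 0 -> univ_adj e a b c d != 0.
Proof.
move=> [[x1 [y1 e_x1y1]] [x2 [y2 /andP[x2y2 ne_x2y2]]]] a0; apply: contraNneq a0 => M0.
have x1y1 : x1 != y1 by apply: contraTneq e_x1y1 => ->; rewrite irr_e.
have := congr1 (fun M : 'M_n => M x1 y1) M0; have := congr1 (fun M : 'M_n => M x2 y2) M0.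
rewrite /= !univ_adjE !mxE e_x1y1 (negbTE ne_x2y2) (negbTE x2y2) (negbTE x1y1) /=; lra.
Qed.

(* A and A + I - J vanish on the empty and on the complete graph. *)
Lemma is_mur1_nontrivial : is_mur R e 1 -> nontrivial_graph e.
Proof.
case=> _ rank_ge1; split.
  have [x [y]] := mxrank_gt0_entry (rank_ge1 1 0 0 0 (oner_neq0 _)).
  rewrite univ_adjE => /eqP Axy; exists x, y.
  by case: (e x y) Axy => //= []; lra.
have [x [y]] := mxrank_gt0_entry (rank_ge1 1 1 (-1) 0 (oner_neq0 _)).
rewrite univ_adjE /compl_graph => /eqP Axy; exists x, y.
by case: eqVneq Axy => [<-|_]; rewrite ?irr_e //=; case: (e x y) => //= []; lra.
Qed.

Lemma is_mur1_of_rank_le1 (a b c d : R) :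
  nontrivial_graph e -> a != 0 -> (\rank (univ_adj e a b c d) <= 1)%N -> is_mur R e 1.
Proof.
move=> ntr_e a0 rank_le1; split=> [|a' b' c' d' a'0]; last first.
  by rewrite lt0n mxrank_eq0 univ_adj_neq0.
exists a, b, c, d; split=> //.
by apply/eqP; rewrite eqn_leq rank_le1 lt0n mxrank_eq0 univ_adj_neq0.
Qed.

End UniversalAdjacency.

Definition set_graph n (pat : bool -> bool -> bool) (S : {set 'I_n}) : rel 'I_n :=
  fun x y => (x != y) && pat (x \in S) (y \in S).

Definition two_cliques n (S : {set 'I_n}) : rel 'I_n :=
  set_graph (fun a b : bool => a == b) S.

Definition clique_on n (S : {set 'I_n}) : rel 'I_n := set_graph andb S.

Section RankOneOffDiagonal.
Variables (R : realType) (n : nat) (e : rel 'I_n) (l p q : R) (w : 'I_n -> R).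
Hypotheses (irr_e : irreflexive e) (ntr_e : nontrivial_graph e) (p_neq_q : p != q).
Hypothesis offdiagE : forall x y, x != y -> l * w x * w y = if e x y then p else q.

Lemma offdiag_eqE (x y u v : 'I_n) : x != y -> u != v ->
  (l * w x * w y == l * w u * w v) = (e x y == e u v).
Proof.
move=> xy uv; rewrite !offdiagE //.
by case: (e x y) (e u v) => [] []; rewrite ?eqxx // ?[q == p]eq_sym (negbTE p_neq_q).
Qed.

Lemma edge_nonedge_weights : exists x y u v, l * w x * w y != l * w u * w v.
Proof.
case: ntr_e => [[x [y exy]] [u [v /andP[uv ne_uv]]]]; exists x, y, u, v.
have xy : x != y by apply: contraTneq exy => ->; rewrite irr_e.
by rewrite offdiag_eqE // exy (negbTE ne_uv).
Qed.

Lemma scale_neq0 : l != 0.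
Proof.
by have [x [y [u [v]]]] := edge_nonedge_weights; apply: contraNneq => ->; rewrite !mul0r.
Qed.

Lemma weight_nonconst : exists x y, w x != w y.
Proof.
have [x [y [u [v]]]] := edge_nonedge_weights.
case: (pickP (fun z => w z != w x)) => [z wz | w_const]; first by exists z, x.
by rewrite -!mulrA !(eqP (negbFE (w_const _))) eqxx.
Qed.

Lemma adj_set_graph pat (S : {set 'I_n}) u v : u != v ->
    (forall x y, x != y -> (l * w x * w y == l * w u * w v) = ~~ pat (x \in S) (y \in S)) ->
  e =2 set_graph pat S \/ compl_graph e =2 set_graph pat S.
Proof.
move=> uv valE.
have adjE x y : x != y -> e x y = (pat (x \in S) (y \in S) == ~~ e u v).
  move=> xy; have := offdiag_eqE xy uv; rewrite valE //.
  by case: (e x y) (e u v) => [] [] /=; case: (pat (x \in S) (y \in S)).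
case euv: (e u v); [right | left] => x y; rewrite /set_graph /compl_graph;
  case: eqVneq => [->|xy] /=; rewrite ?irr_e // adjE // euv; by case: (pat _ _).
Qed.

Lemma zero_weight_clique_on z : w z = 0 ->
  e =2 clique_on [set x | w x != 0] \/ compl_graph e =2 clique_on [set x | w x != 0].
Proof.
move=> wz; have [u uz] : exists u, u != z.
  case: ntr_e => [[x [y exy]] _]; case: (eqVneq x z) => [xz|]; last by exists x.
  by exists y; rewrite -xz eq_sym; apply: contraTneq exy => ->; rewrite irr_e.
apply: (adj_set_graph uz) => x y _.
by rewrite wz mulr0 !inE !mulf_eq0 (negbTE scale_neq0) /= negb_and !negbK.
Qed.

Section NonzeroWeights.
Hypothesis w_neq0 : forall x, w x != 0.

Lemma mul_weight_neq a b c : w b != w c -> l * w a * w b != l * w a * w c.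
Proof.
by apply: contra => /eqP /(mulfI (mulf_neq0 scale_neq0 (w_neq0 a))) ->.
Qed.

Lemma weight_two_values x y z : w x != w y -> w x != w z -> w y = w z.
Proof.
move=> wxy wxz; apply/eqP; apply: contraT => wyz.
have xy : x != y by apply: contraNneq wxy => ->.
have xz : x != z by apply: contraNneq wxz => ->.
have yz : y != z by apply: contraNneq wyz => ->.
have := mul_weight_neq x wyz; have := mul_weight_neq y wxz.
have := mul_weight_neq z wxy; rewrite ![l * w z * _]mulrAC ![l * w y * w x]mulrAC.
by rewrite !offdiagE //; case: (e x y) (e x z) (e y z) => [] [] []; rewrite eqxx.
Qed.

Lemma nonzero_weights_two_cliques :
  exists S, e =2 two_cliques S \/ compl_graph e =2 two_cliques S.
Proof.
have [x0 [t wt]] := weight_nonconst.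
have outE y : w y != w x0 -> w y = w t.
  by move=> wy; apply: (@weight_two_values x0); rewrite // eq_sym.
have x0t : x0 != t by apply: contraNneq wt => ->.
exists [set y | w y == w x0]; apply: (adj_set_graph x0t) => x y _; rewrite !inE.
case: (eqVneq (w x) (w x0)) => [-> | /outE ->];
  case: (eqVneq (w y) (w x0)) => [-> | /outE ->] /=.
- by apply/negbTE/mul_weight_neq.
- by rewrite eqxx.
- by rewrite mulrAC eqxx.
- by rewrite ![_ * w t]mulrAC; apply/negbTE/mul_weight_neq; rewrite eq_sym.
Qed.

End NonzeroWeights.

Lemma rank1_offdiag_shape : exists2 g, g = e \/ g = compl_graph e &
  exists S, g =2 two_cliques S \/ g =2 clique_on S.
Proof.
case: (pickP (fun z => w z == 0)) => [z /eqP wz | w_neq0].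
  have [gE | gE] := zero_weight_clique_on wz.
    by exists e; [left | exists [set x | w x != 0]; right].
  by exists (compl_graph e); [right | exists [set x | w x != 0]; right].
have [S [gE | gE]] := nonzero_weights_two_cliques (fun x => negbT (w_neq0 x)).
  by exists e; [left | exists S; left].
by exists (compl_graph e); [right | exists S; left].
Qed.

End RankOneOffDiagonal.

Section Nontriviality.
Variable n : nat.
Implicit Types (g h : rel 'I_n) (S : {set 'I_n}).

Lemma card_ltn_notin S : (#|S| < n)%N <-> exists t, t \notin S.
Proof.
have := cardsC S; rewrite card_ord => cardSC.
split=> [S_lt | [t tS]].
  have /card_gt0P[t] : (0 < #|~: S|)%N by lia.
  by rewrite inE => tS; exists t.
have : (0 < #|~: S|)%N by apply/card_gt0P; exists t; rewrite inE.
lia.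
Qed.

Lemma nontrivial_graph_eq g h : g =2 h -> nontrivial_graph g <-> nontrivial_graph h.
Proof.
move=> gh; rewrite /nontrivial_graph /compl_graph.
by split=> -[[x [y gxy]] [u [v ngv]]]; split;
  [exists x, y | exists u, v | exists x, y | exists u, v]; rewrite ?gh // -?gh.
Qed.

Lemma nontrivial_compl g :
  irreflexive g -> nontrivial_graph g -> nontrivial_graph (compl_graph g).
Proof.
move=> irr_g [[x [y gxy]] ntr_cg]; split=> //; exists x, y.
have xy : x != y by apply: contraTneq gxy => ->; rewrite irr_g.
by rewrite /compl_graph xy gxy.
Qed.

Lemma nontrivial_two_cliques S :
  (2 < n)%N -> nontrivial_graph (two_cliques S) <-> (0 < #|S| < n)%N.
Proof.
move=> n_gt2; split=> [[_ [x [y]]] | /andP[/card_gt0P[s sS] /card_ltn_notin[t tS]]].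
  rewrite /compl_graph /two_cliques /set_graph => /andP[-> /= xyS].
  have [s [t [sS tS]]] : exists s t, s \in S /\ t \notin S.
    by case: (boolP (x \in S)) xyS => xS; case: (boolP (y \in S)) => yS //= _;
      [exists x, y | exists y, x].
  by apply/andP; split; [apply/card_gt0P; exists s | apply/card_ltn_notin; exists t].
split.
  have : (1 < #|S|)%N || (1 < #|~: S|)%N by have := cardsC S; rewrite card_ord; lia.
  case/orP=> /card_gt1P[x [y [xS yS xy]]]; exists x, y; rewrite /two_cliques /set_graph xy /=.
    by rewrite xS yS.
  by move: xS yS; rewrite !inE => /negbTE-> /negbTE->.
have st : s != t by apply: contraNneq tS => <-.
by exists s, t; rewrite /compl_graph /two_cliques /set_graph st sS (negbTE tS).
Qed.

Lemma nontrivial_clique_on S : nontrivial_graph (clique_on S) <-> (1 < #|S| < n)%N.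
Proof.
rewrite /nontrivial_graph /compl_graph /clique_on /set_graph.
split=> [[[x [y /and3P[xy xS yS]]] [u [v /andP[uv]]]] | /andP[/card_gt1P[x [y [xS yS xy]]]]].
  rewrite uv /= negb_and => uvS; apply/andP; split; first by apply/card_gt1P; exists x, y.
  by apply/card_ltn_notin; case/orP: uvS; eexists; eassumption.
case/card_ltn_notin=> t tS; have xt : x != t by apply: contraNneq tS => <-.
by split; [exists x, y | exists x, t]; rewrite ?xy ?xt ?xS ?yS ?(negbTE tS).
Qed.

End Nontriviality.

Definition mur1_shape n (g : rel 'I_n) : Prop := exists S : {set 'I_n},
  ((0 < #|S| < n)%N /\ g =2 two_cliques S) \/ ((1 < #|S| < n)%N /\ g =2 clique_on S).

Section RankOneRealization.
Variables (R : realType) (n : nat) (g : rel 'I_n) (S : {set 'I_n}).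

Lemma two_cliques_univ_adjE : g =2 two_cliques S -> forall i j,
  univ_adj g 2 2 (-1) 0 i j =
  (if i \in S then 1 else -1 : R) * (if j \in S then 1 else -1 : R).
Proof.
move=> gS i j; rewrite univ_adjE gS /two_cliques /set_graph.
by case: eqVneq => [<-|_]; case: (i \in S); case: (j \in S) => /=; lra.
Qed.

Lemma clique_on_univ_adjE : (1 < #|S|)%N -> g =2 clique_on S -> forall i j,
  univ_adj g 1 0 0 (#|S|.-1%:R : R)^-1 i j = (i \in S)%:R * (j \in S)%:R.
Proof.
move=> S_gt1 gS i j.
have degE : #|[set k | g i k]| = if i \in S then #|S|.-1 else 0%N.
  case iS: (i \in S).
    rewrite (cardsD1 i S) iS add1n /=; apply: eq_card => k.
    by rewrite !inE gS /clique_on /set_graph iS eq_sym.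
  apply/eqP; rewrite cards_eq0; apply/eqP/setP => k.
  by rewrite !inE gS /clique_on /set_graph iS andbF.
have S1_neq0 : #|S|.-1%:R != 0 :> R by rewrite pnatr_eq0 -lt0n -ltnS prednK // ltnW.
rewrite univ_adjE gS degE /clique_on /set_graph.
case: eqVneq => [<-|_]; case: (i \in S); case: (j \in S) => //=;
  rewrite ?mul1r ?mulVf //; lra.
Qed.

End RankOneRealization.

Lemma is_mur1_of_shape (R : realType) n (g : rel 'I_n) :
  (2 < n)%N -> mur1_shape g -> is_mur R g 1.
Proof.
move=> n_gt2 [S [[cardS gS] | [cardS gS]]].
- have irr_g : irreflexive g by move=> x; rewrite gS /two_cliques /set_graph eqxx.
  have ntr_g : nontrivial_graph g by apply/(nontrivial_graph_eq gS)/nontrivial_two_cliques.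
  apply: (is_mur1_of_rank_le1 irr_g ntr_g (a := 2) (b := 2) (c := -1) (d := 0)).
    by rewrite pnatr_eq0.
  exact: (rank_outer_le1 (two_cliques_univ_adjE R gS)).
- have irr_g : irreflexive g by move=> x; rewrite gS /clique_on /set_graph eqxx.
  have ntr_g : nontrivial_graph g by apply/(nontrivial_graph_eq gS)/nontrivial_clique_on.
  apply: (is_mur1_of_rank_le1 irr_g ntr_g (b := 0) (c := 0) (oner_neq0 R)).
  case/andP: cardS => S_gt1 _.
  exact: (rank_outer_le1 (clique_on_univ_adjE R S_gt1 gS)).
Qed.

Lemma is_mur1_shapeP (R : realType) n (e : rel 'I_n) :
  (2 < n)%N -> simple_graph e ->
  is_mur R e 1 <-> mur1_shape e \/ mur1_shape (compl_graph e).
Proof.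
move=> n_gt2 [sym_e irr_e]; split=> [mur1 | [shape_e | shape_ce]]; last first.
- by apply/(is_mur_compl R irr_e); apply: is_mur1_of_shape.
- exact: is_mur1_of_shape.
have ntr_e := is_mur1_nontrivial irr_e mur1.
case: mur1 => [[a [b [c [d [a0 rank1]]]]] _].
have [l [w lwE]] := rank1_sym_factor rank1 (tr_univ_adj a b c d sym_e).
have offdiagE x y : x != y -> l * w x * w y = if e x y then a + c else c.
  by move=> xy; rewrite -lwE univ_adjE (negbTE xy); case: (e x y) => /=; lra.
have ac_neq_c : a + c != c by rewrite -subr_eq0 addrK.
have [g g_e [S gS]] := rank1_offdiag_shape irr_e ntr_e ac_neq_c offdiagE.
have ntr_g : nontrivial_graph g by case: g_e => ->; last exact: nontrivial_compl.
suff shape_g : mur1_shape g by case: g_e shape_g => ->; [left | right].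
exists S; case: gS => gS; [left | right]; split=> //.
  by apply/(nontrivial_two_cliques S n_gt2)/(nontrivial_graph_eq gS).
by apply/nontrivial_clique_on/(nontrivial_graph_eq gS).
Qed.

Lemma card_ord_lt n r : (r <= n)%N -> #|[set i : 'I_n | (i < r)%N]| = r.
Proof.
move=> r_le_n.
have widen_inj : injective (widen_ord r_le_n) by move=> i j /(congr1 val) /= /val_inj.
rewrite -[RHS](card_ord r) -(card_imset _ widen_inj).
apply: eq_card => i; rewrite inE; apply/idP/imsetP => [i_lt_r | [j _ ->]].
  by exists (Ordinal i_lt_r) => //; apply: val_inj.
exact: (ltn_ord j).
Qed.

Lemma exists_bij_prefix n (S : {set 'I_n}) :
  exists f : 'I_n -> 'I_n, bijective f /\ forall x, (f x < #|S|)%N = (x \in S).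
Proof.
pose s := enum S ++ enum (~: S).
have s_all x : x \in s by rewrite mem_cat !mem_enum inE orbN.
have index_lt x : (index x s < n)%N.
  have := cardsC S; rewrite card_ord => cardSC.
  by rewrite -[X in (_ < X)%N]cardSC !cardE -size_cat index_mem.
exists (fun x => Ordinal (index_lt x)); split.
  apply: injF_bij => x y /(congr1 val) /= sxy.
  by rewrite -(nth_index x (s_all x)) sxy nth_index.
move=> x /=; rewrite /s index_cat mem_enum cardE.
by case xS: (x \in S); [rewrite index_mem mem_enum | rewrite ltnNge leq_addr].
Qed.

Lemma graph_iso_set_graphP n pat (g h : rel 'I_n) r :
  (r <= n)%N -> h =2 set_graph pat [set i : 'I_n | (i < r)%N] ->
  graph_iso g h <-> exists2 S : {set 'I_n}, #|S| = r & g =2 set_graph pat S.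
Proof.
move=> r_le_n hE; split=> [[f [f_bij gE]] | [S cardS gS]].
  exists (f @^-1: [set i : 'I_n | (i < r)%N]).
    by rewrite card_preimset ?card_ord_lt //; apply: bij_inj.
  by move=> x y; rewrite gE hE /set_graph (inj_eq (bij_inj f_bij)) !inE.
have [f [f_bij fS]] := exists_bij_prefix S.
exists f; split=> // x y.
by rewrite gS hE /set_graph (inj_eq (bij_inj f_bij)) !inE -cardS !fS.
Qed.

Lemma mur1_shapeP n (g : rel 'I_n) :
  mur1_shape g <->
  (exists r s : nat, [/\ (0 < r)%N, (0 < s)%N, (r + s)%N = n & graph_iso g (@KK n r)]) \/
  (exists r s : nat, [/\ (1 < r)%N, (r < n)%N, (r + s)%N = n & graph_iso g (@KKbar n r)]).
Proof.
have KKE r : @KK n r =2 two_cliques [set i : 'I_n | (i < r)%N].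
  by move=> x y; rewrite /KK /two_cliques /set_graph !inE.
have KKbarE r : @KKbar n r =2 clique_on [set i : 'I_n | (i < r)%N].
  by move=> x y; rewrite /KKbar /clique_on /set_graph !inE.
split=> [[S [[/andP[S_gt0 S_lt] gS] | [/andP[S_gt1 S_lt] gS]]] |
         [[r [s [r_gt0 s_gt0 rs iso_g]]] | [r [s [r_gt1 r_lt rs iso_g]]]]].
- left; exists #|S|, (n - #|S|)%N; split; rewrite ?subn_gt0 ?subnKC ?(ltnW S_lt) //.
  by apply/(graph_iso_set_graphP g (ltnW S_lt) (KKE _)); exists S.
- right; exists #|S|, (n - #|S|)%N; split; rewrite ?subnKC ?(ltnW S_lt) //.
  by apply/(graph_iso_set_graphP g (ltnW S_lt) (KKbarE _)); exists S.
- have r_lt : (r < n)%N by lia.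
  have [S cardS gS] := (graph_iso_set_graphP g (ltnW r_lt) (KKE r)).1 iso_g.
  by exists S; left; rewrite cardS r_gt0 r_lt.
- have [S cardS gS] := (graph_iso_set_graphP g (ltnW r_lt) (KKbarE r)).1 iso_g.
  by exists S; right; rewrite cardS r_gt1 r_lt.
Qed.

Theorem theorem26 (R : realType) (n : nat) (hn : (2 < n)%N) (e : rel 'I_n)
  (he : simple_graph e) :
  is_mur R e 1 <->
  exists2 g : rel 'I_n, g = e \/ g = compl_graph e &
    (exists r s : nat, [/\ (0 < r)%N, (0 < s)%N, (r + s)%N = n &
        graph_iso g (@KK n r)]) \/
    (exists r s : nat, [/\ (1 < r)%N, (r < n)%N, (r + s)%N = n &
        graph_iso g (@KKbar n r)]).
Proof.
rewrite is_mur1_shapeP //; split=> [[shape_e | shape_ce] | [g g_e /mur1_shapeP shape_g]].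
- by exists e; [left | apply/mur1_shapeP].
- by exists (compl_graph e); [right | apply/mur1_shapeP].
- by case: g_e shape_g => ->; [left | right].
Qed.
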